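(* Let $\kappa\ge1$, $n\ge1$ be integers and $0<\epsilon<1$. Let $\mathcal{C}=\{q\in\mathbb{R}^{2^\kappa}: q_i\ge0\ \forall i,\ \sum_{i=0}^{2^\kappa-1}q_i=1\}$. If $q\in\mathcal{C}$ is a local minimizer of $q\mapsto l(n,\epsilon,q)$ on $\mathcal{C}$, then $q_0=0$.
   Context: $W=\mathbb{F}_2^\kappa$; $\nu(i)\in W$ is the binary expansion of $i\in\{0,\dots,2^\kappa-1\}$; vectors $q\in\mathbb{R}^{2^\kappa}$ are indexed $q_0,\dots,q_{2^\kappa-1}$. For a subspace $S\subseteq W$, $\zeta(S,q)=\sum_{i:\nu(i)\in S}q_i$; $\Xi(W,d)$ is the set of $d$-dimensional subspaces of $W$. For real $q$, the (continuous) expected equivocation loss is $l(n,\epsilon,q)=n(1-\epsilon)-\kappa+\sum_{\delta=1}^{\kappa}K_\delta\sum_{S\in\Xi(W,\kappa-\delta)}\epsilon^{n(1-\zeta(S,q))}$, with $K_\delta=\prod_{i=1}^{\delta-1}(1-2^i)$. (When $q$ is the column-distribution vector of a $\kappa\times n$ generator matrix $G$, i.e. $q_i$ is the fraction of columns of $G$ equal to $\nu(i)$, this is the expected equivocation loss of the corresponding coset code over a binary erasure channel with erasure probability $\epsilon$.) A local minimizer of $f$ on $\mathcal{C}$ is a point $q\in\mathcal{C}$ with $f(q)\le f(q')$ for all $q'\in\mathcal{C}$ in some neighborhood of $q$. *)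

From HB Require Import structures.
From mathcomp Require Import all_boot all_order all_algebra.
From mathcomp Require Import reals exp.
Set Implicit Arguments. Unset Strict Implicit. Unset Printing Implicit Defensive.
Import Order.TTheory GRing.Theory Num.Theory.
Local Open Scope ring_scope.

Definition W (kappa : nat) := 'rV['F_2]_kappa.

(* nu(i) : binary expansion of i; coordinate j is the j-th bit of i *)
Definition nu (kappa : nat) (i : nat) : W kappa :=
  \row_(j < kappa) ((odd (i %/ 2 ^ j))%:R : 'F_2).

Definition is_subspace (kappa : nat) (S : {set W kappa}) : bool :=
  (0 \in S) && [forall a : 'F_2, forall x in S, forall y in S, (a *: x + y) \in S].

(* Xi(W,d): subspaces of dimension d; over F_2 dim S = d iff #|S| = 2^d *)
Definition Xi (kappa d : nat) : pred {set W kappa} :=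
  fun S => is_subspace S && (#|S| == 2 ^ d)%N.

Definition zeta (R : realType) (kappa : nat) (S : {set W kappa})
  (q : 'I_(2 ^ kappa) -> R) : R :=
  \sum_(i < 2 ^ kappa | nu kappa i \in S) q i.

Definition Kd (R : realType) (delta : nat) : R :=
  \prod_(1 <= i < delta) (1 - 2 ^+ i).

Definition loss (R : realType) (kappa n : nat) (eps : R)
  (q : 'I_(2 ^ kappa) -> R) : R :=
  n%:R * (1 - eps) - kappa%:R +
  \sum_(1 <= delta < kappa.+1)
     Kd R delta * \sum_(S : {set W kappa} | Xi (kappa - delta) S)
                    powR eps (n%:R * (1 - zeta S q)).

Definition inC (R : realType) (kappa : nat) (q : 'I_(2 ^ kappa) -> R) : Prop :=
  (forall i, 0 <= q i) /\ \sum_(i < 2 ^ kappa) q i = 1.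

Definition local_min_on_C (R : realType) (kappa : nat)
  (f : ('I_(2 ^ kappa) -> R) -> R) (q : 'I_(2 ^ kappa) -> R) : Prop :=
  inC q /\ exists e : R, 0 < e /\
    forall q', inC q' -> (forall i, `|q' i - q i| < e) -> f q <= f q'.

(** Write the loss as [\sum_S c(S) eps ^ (n (1 - zeta S q))] with [c(S) = K_(codim S)].
    Since [nu 0 = 0] lies in every subspace, moving a mass [t] from [q_0] to [q_1] multiplies
    exactly the terms of the subspaces avoiding [v = nu 1] by [eps ^ (n t) < 1]; the loss
    drops unless these terms sum to something nonpositive.  Writing
    [eps ^ (n (1 - zeta S q)) = \prod_(nu j \notin S) eps ^ (n q_j)] and expanding over
    [1 = eps ^ (n q_j) + (1 - eps ^ (n q_j))] for [nu j \in S] turns that sum into a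
    nonnegative combination of [\sum_(S >= A, v \notin S) c(S)], which equals
    [v \notin span A] by a counting identity over the subspace lattice of [F_2 ^ kappa];
    the term [A = 0] makes it positive. *)

From HB Require Import structures.
From mathcomp Require Import all_boot all_order all_algebra.
From mathcomp Require Import reals exp.
From mathcomp Require Import zify ring.
Set Implicit Arguments. Unset Strict Implicit. Unset Printing Implicit Defensive.
Import Order.TTheory GRing.Theory Num.Theory.
Local Open Scope ring_scope.

Lemma F2_cases (a : 'F_2) : a = 0 \/ a = 1.
Proof. case: a => -[|[|k]] Hk /=; [left|right|]; try exact: val_inj. by []. Qed.

Section Subspaces.
Variable k : nat.
Implicit Types (x y z v w : W k) (A U D S : {set W k}).

Lemma addWW x : x + x = 0.
Proof.
have -> : x + x = (1 + 1 : 'F_2) *: x by rewrite scalerDl scale1r.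
have -> : (1 + 1 : 'F_2) = 0 by apply: val_inj.
by rewrite scale0r.
Qed.

Lemma addW_eq0 x y : x + y = 0 -> x = y.
Proof. by move=> h; rewrite -[x]addr0 -(addWW y) addrA h add0r. Qed.

Lemma addWK x y : x + y + y = x.
Proof. by rewrite -addrA addWW addr0. Qed.

Lemma subspace0 S : is_subspace S -> 0 \in S.
Proof. by case/andP. Qed.

Lemma subspaceD S x y : is_subspace S -> x \in S -> y \in S -> x + y \in S.
Proof.
case/andP=> _ /forallP /(_ 1) /forall_inP H xS yS.
by have := forall_inP (H x xS) y yS; rewrite scale1r.
Qed.

Lemma addr_closed_subspace S :
  0 \in S -> (forall x y, x \in S -> y \in S -> x + y \in S) -> is_subspace S.
Proof.
move=> S0 SD; apply/andP; split=> //.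
apply/forallP=> a; apply/forall_inP=> x xS; apply/forall_inP=> y yS.
by case: (F2_cases a) => ->; rewrite ?scale0r ?add0r ?scale1r //; apply: SD.
Qed.

Lemma zero_subspace : is_subspace [set 0 : W k].
Proof.
apply: addr_closed_subspace; rewrite ?inE // => x y.
by rewrite !inE => /eqP -> /eqP ->; rewrite addr0.
Qed.

Lemma card_W : #|[set: W k]| = (2 ^ k)%N.
Proof. by rewrite cardsT card_mx card_Fp // mul1n. Qed.

Lemma card_subspace_gt0 S : is_subspace S -> (0 < #|S|)%N.
Proof. by move=> sS; apply/card_gt0P; exists 0; apply: subspace0. Qed.

(** For a subspace [A], this is [A + <z>]. *)
Definition adjoin A z : {set W k} := A :|: [set z + a | a in A].

Lemma adjoin_subspace A z : is_subspace A -> is_subspace (adjoin A z).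
Proof.
move=> sA; apply: addr_closed_subspace; first by rewrite inE subspace0.
move=> x y; rewrite !inE => /orP[xA|/imsetP[a aA ->]] /orP[yA|/imsetP[b bA ->]].
- by rewrite subspaceD.
- by apply/orP; right; apply/imsetP; exists (x + b); rewrite ?subspaceD // addrCA.
- by apply/orP; right; apply/imsetP; exists (a + y); rewrite ?subspaceD // addrA.
- by rewrite addrACA addWW add0r subspaceD.
Qed.

Lemma sub_adjoin A z : A \subset adjoin A z.
Proof. by apply/subsetP=> x xA; rewrite inE xA. Qed.

Lemma mem_adjoin A z : is_subspace A -> z \in adjoin A z.
Proof.
by move=> sA; rewrite inE; apply/orP; right; apply/imsetP; exists 0; rewrite ?subspace0 ?addr0.
Qed.

Lemma card_adjoin A z : is_subspace A -> z \notin A -> #|adjoin A z| = (2 * #|A|)%N.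
Proof.
move=> sA zA; rewrite /adjoin cardsU.
have -> : A :&: [set z + a | a in A] = set0.
  apply/setP=> x; rewrite !inE; apply/negbTE/negP=> /andP[xA /imsetP[a aA xe]].
  by move: zA; rewrite -(addWK z a) -xe subspaceD.
by rewrite cards0 subn0 card_imset ?mul2n ?addnn //; apply: addrI.
Qed.

Lemma adjoin_subset A S z : is_subspace A -> is_subspace S ->
  (adjoin A z \subset S) = (A \subset S) && (z \in S).
Proof.
move=> sA sS; apply/idP/andP.
  move=> H; split; first exact: subset_trans (sub_adjoin A z) H.
  exact: (subsetP H) (mem_adjoin z sA).
case=> AS zS; apply/subsetP=> x; rewrite inE => /orP[xA|/imsetP[a aA ->]].
  exact: (subsetP AS).
by rewrite subspaceD // (subsetP AS).
Qed.

Definition sumset U D : {set W k} := [set x.1 + x.2 | x in setX U D].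

Lemma mem_sumset U D u t : u \in U -> t \in D -> u + t \in sumset U D.
Proof. by move=> uU tD; apply/imsetP; exists (u, t); rewrite ?inE ?uU. Qed.

Lemma card_sumset U D : is_subspace U -> is_subspace D ->
  (forall x, x \in U -> x \in D -> x = 0) -> #|sumset U D| = (#|U| * #|D|)%N.
Proof.
move=> sU sD hUD; rewrite /sumset card_in_imset ?cardsX //.
move=> [u1 t1] [u2 t2]; rewrite !inE /= => /andP[u1U t1D] /andP[u2U t2D] e.
have h : u1 + u2 = t1 + t2 by apply: addW_eq0; rewrite addrACA e addWW.
have h0 : u1 + u2 = 0 by apply: hUD; [exact: subspaceD | rewrite h; exact: subspaceD].
by rewrite (addW_eq0 h0) (addW_eq0 (etrans (esym h) h0)).
Qed.

Lemma card_sumset_le U D : is_subspace U -> is_subspace D ->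
  (forall x, x \in U -> x \in D -> x = 0) -> (#|U| * #|D| <= 2 ^ k)%N.
Proof. by move=> *; rewrite -card_sumset // -card_W subset_leq_card ?subsetT. Qed.

Definition span A : {set W k} := \bigcap_(S | is_subspace S && (A \subset S)) S.

Lemma span_subspace A : is_subspace (span A).
Proof.
apply: addr_closed_subspace; first by apply/bigcapP=> S /andP[sS _]; apply: subspace0.
move=> x y /bigcapP hx /bigcapP hy; apply/bigcapP=> S hS.
by apply: subspaceD (hx S hS) (hy S hS); case/andP: hS.
Qed.

Lemma span_min A S : is_subspace S -> A \subset S -> span A \subset S.
Proof. by move=> sS AS; apply: bigcap_inf; rewrite sS. Qed.

Lemma sub_span A : A \subset span A.
Proof. by apply/bigcapsP=> S /andP[]. Qed.

End Subspaces.

Lemma KdS (R : realType) d : (1 <= d)%N -> Kd R d.+1 = Kd R d * (1 - 2 ^+ d).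
Proof. by move=> hd; rewrite /Kd big_nat_recr. Qed.

Lemma Kd1 (R : realType) : Kd R 1 = 1.
Proof. by rewrite /Kd big_geq. Qed.

Section CodimensionCoefficient.
Variables (R : realType) (k : nat).
Implicit Types (x v w : W k) (A U D S : {set W k}).

(** The coefficient of [eps ^ (n (1 - zeta S q))] in [loss]: [Kd (codim S)] for a proper
    subspace [S], and 0 otherwise. *)
Definition Kcoef S : R := \sum_(1 <= d < k.+1) Kd R d * (Xi (k - d) S)%:R.

Lemma Kcoef_nsubspace S : ~~ is_subspace S -> Kcoef S = 0.
Proof. by move=> h; rewrite /Kcoef big1 // => d _; rewrite /Xi (negbTE h) mulr0. Qed.

Lemma Kcoef_card S d : is_subspace S -> (#|S| * 2 ^ d = 2 ^ k)%N -> (1 <= d)%N ->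
  Kcoef S = Kd R d.
Proof.
move=> sS hS hd; have S0 := card_subspace_gt0 sS.
have dk : (d <= k)%N by rewrite -(@leq_exp2l 2) // -hS leq_pmull.
have cardS : #|S| = (2 ^ (k - d))%N.
  by apply/eqP; rewrite -(@eqn_pmul2r (2 ^ d)) ?expn_gt0 // -expnD subnK // hS.
rewrite /Kcoef (bigD1_seq d) ?mem_index_iota ?iota_uniq ?hd ?ltnS //=.
rewrite /Xi sS cardS eqxx mulr1 big1_seq ?addr0 // => i /andP[id].
rewrite mem_index_iota ltnS eqn_exp2l // => /andP[i1 ik].
suff /negbTE -> : (k - d != k - i)%N by rewrite mulr0.
by apply: contra id => /eqP ?; apply/eqP; lia.
Qed.

Definition admissible U D S : bool := (U \subset S) && (S :&: D \subset [set 0]).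

Lemma sum_admissible_direct U D d :
  is_subspace U -> is_subspace D -> (forall x, x \in U -> x \in D -> x = 0) ->
  #|D| = (2 ^ d)%N -> (1 <= d)%N -> (#|U| * #|D| = 2 ^ k)%N ->
  \sum_S Kcoef S * (admissible U D S)%:R = Kd R d.
Proof.
move=> sU sD hUD hD hd hk.
have sumT : sumset U D = setT.
  by apply/eqP; rewrite eqEcard subsetT card_W card_sumset //= hk.
have admU S : is_subspace S -> admissible U D S -> S = U.
  move=> sS /andP[US SD]; apply/setP=> x; apply/idP/idP; last exact: (subsetP US).
  move=> xS; have : x \in sumset U D by rewrite sumT inE.
  case/imsetP=> -[u t]; rewrite inE /= => /andP[uU tD] xE; move: xS; rewrite xE => utS.
  have tS : t \in S by rewrite -(addWK t u) [t + u]addrC subspaceD // (subsetP US).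
  have : t \in [set 0] by apply: (subsetP SD); rewrite inE tS.
  by rewrite inE => /eqP ->; rewrite addr0.
rewrite (bigD1 U) //= big1 ?addr0.
  have -> : admissible U D U.
    rewrite /admissible subxx; apply/subsetP=> x; rewrite !inE => /andP[xU xD].
    by rewrite (hUD x xU xD).
  by rewrite mulr1 (@Kcoef_card _ d) // -hD.
move=> S SU; case: (boolP (is_subspace S)) => sS; last by rewrite Kcoef_nsubspace ?mul0r.
case: (boolP (admissible U D S)) => adm; last by rewrite mulr0.
by move: SU; rewrite (admU S sS adm) eqxx.
Qed.

(** For [w] outside [U + D], the complements of [D] above [U] either also avoid [w + D],
    or contain exactly one [w + t], [t \in D]. *)
Lemma admissible_split U D S w :
  is_subspace U -> is_subspace D -> is_subspace S -> w \notin sumset U D ->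
  (admissible U D S : nat) =
  (admissible U (adjoin D w) S + \sum_(t in D) (admissible (adjoin U (w + t)%R) D S : nat))%N.
Proof.
move=> sU sD sS wn.
have wD : w \notin D.
  by apply: contra wn => wD; rewrite -[w]add0r mem_sumset ?subspace0.
under eq_bigr => t _ do rewrite /admissible adjoin_subset //.
rewrite /admissible.
case US : (U \subset S) => /=; last by rewrite big1.
case SD : (S :&: D \subset [set 0]) => /=; last first.
  rewrite big1; last by move=> t _; rewrite andbF.
  case h : (S :&: adjoin D w \subset [set 0]) => //.
  by move: SD; rewrite (subset_trans _ h) // setIS // sub_adjoin.
case: (boolP [exists t in D, w + t \in S]).
  case/exists_inP=> t0 t0D t0S.
  have -> : (S :&: adjoin D w \subset [set 0]) = false.
    apply/negbTE/negP=> /subsetP /(_ (w + t0)); rewrite in_setI t0S /=.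
    have -> : w + t0 \in adjoin D w by rewrite inE; apply/orP; right; apply/imsetP; exists t0.
    by move=> /(_ isT); rewrite inE => /eqP /addW_eq0 wt0; rewrite wt0 t0D in wD.
  rewrite (bigD1 t0) //= t0S big1 // => t /andP[tD tt0]; rewrite andbT.
  apply/eqP; rewrite eqb0; apply/negP => tS.
  have : t + t0 \in S :&: D.
    rewrite inE [t + t0 \in D]subspaceD // andbT.
    by rewrite -[t + t0]add0r -(addWW w) addrACA subspaceD.
  by move/(subsetP SD); rewrite inE => /eqP /addW_eq0 tt0E; rewrite tt0E eqxx in tt0.
move=> /exists_inPn hn; rewrite big1 ?andbT; last by move=> t tD; rewrite andbT (negbTE (hn t tD)).
rewrite addn0; suff -> : S :&: adjoin D w \subset [set 0] by [].
apply/subsetP=> x; rewrite !inE => /andP[xS /orP[xD|/imsetP[a aD xe]]].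
  by have := subsetP SD x; rewrite !inE xS xD; apply.
by move: (hn a aD); rewrite -xe xS.
Qed.

Lemma sum_admissible_adjoin U D d w :
  is_subspace U -> is_subspace D -> #|D| = (2 ^ d)%N -> (1 <= d)%N ->
  w \notin sumset U D ->
  \sum_S Kcoef S * (admissible U (adjoin D w) S)%:R = Kd R d.+1 ->
  (forall t, t \in D -> \sum_S Kcoef S * (admissible (adjoin U (w + t)) D S)%:R = Kd R d) ->
  \sum_S Kcoef S * (admissible U D S)%:R = Kd R d.
Proof.
move=> sU sD hD hd wn sumD sumU.
have splitS S : Kcoef S * (admissible U D S)%:R =
   Kcoef S * (admissible U (adjoin D w) S)%:R +
   \sum_(t in D) Kcoef S * (admissible (adjoin U (w + t)) D S)%:R.
  case: (boolP (is_subspace S)) => sS; last first.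
    by rewrite Kcoef_nsubspace // !mul0r add0r big1 // => t _; rewrite mul0r.
  by rewrite (admissible_split sU sD sS wn) natrD natr_sum mulrDr mulr_sumr.
under eq_bigr => S _ do rewrite splitS.
rewrite big_split /= sumD exchange_big /= (eq_bigr (fun _ => Kd R d)); last exact: sumU.
rewrite sumr_const hD KdS // -natrX; ring.
Qed.

(** Induction on the codimension of [U + D]: a vector [w] outside it splits the sum as in
    [admissible_split], and [Kd (d + 1) + 2 ^ d * Kd d = Kd d]. *)
Lemma sum_admissible U D d :
  is_subspace U -> is_subspace D -> (forall x, x \in U -> x \in D -> x = 0) ->
  #|D| = (2 ^ d)%N -> (1 <= d)%N ->
  \sum_S Kcoef S * (admissible U D S)%:R = Kd R d.
Proof.
move: {2}(2 ^ k - #|U| * #|D|)%N (leqnn (2 ^ k - #|U| * #|D|)) => N.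
elim: N U D d => [|N IH] U D d hN sU sD hUD hD hd.
  by apply: sum_admissible_direct => //; have := card_sumset_le sU sD hUD; lia.
case: (ltnP (#|U| * #|D|) (2 ^ k)) => lt; last first.
  by apply: sum_admissible_direct => //; have := card_sumset_le sU sD hUD; lia.
have : ~~ (setT \subset sumset U D).
  by apply/negP=> /subset_leq_card; rewrite card_W card_sumset //; lia.
case/subsetPn => w _ wn.
have U0 := card_subspace_gt0 sU; have D0 := card_subspace_gt0 sD.
have wD : w \notin D by apply: contra wn => wD; rewrite -[w]add0r mem_sumset ?subspace0.
apply: (sum_admissible_adjoin sU sD hD hd wn).
  have hUD' x : x \in U -> x \in adjoin D w -> x = 0.
    move=> xU; rewrite inE => /orP[xD|/imsetP[a aD xe]]; first exact: hUD.
    by move: wn; rewrite -(addWK w a) -xe mem_sumset.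
  apply: IH; rewrite ?card_adjoin ?adjoin_subspace ?hD ?expnS //; lia.
move=> t tD.
have wtU : w + t \notin U by apply: contra wn => h; rewrite -(addWK w t) mem_sumset.
have hUD' x : x \in adjoin U (w + t) -> x \in D -> x = 0.
  move=> /[!inE] /orP[xU|/imsetP[a aU xe]] xD; first exact: hUD.
  move: wn; apply: contraNeq => _.
  have -> : w = a + (x + t) by rewrite xe (addrC (w + t)) !addrA addWW add0r addWK.
  by rewrite mem_sumset // subspaceD.
apply: IH; rewrite ?card_adjoin ?adjoin_subspace //; lia.
Qed.

Lemma sum_Kcoef_avoiding A v : v != 0 ->
  \sum_S Kcoef S * ((A \subset S) && (v \notin S))%:R = (v \notin span A)%:R.
Proof.
move=> v0; case: (boolP (v \in span A)) => vA /=.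
  rewrite big1 // => S _; case: (boolP (is_subspace S)) => sS; last by rewrite Kcoef_nsubspace ?mul0r.
  case: (boolP (A \subset S)) => AS; last by rewrite mulr0.
  by rewrite (subsetP (span_min sS AS) v vA) mulr0.
set D := adjoin [set 0] v.
have sD : is_subspace D by rewrite adjoin_subspace ?zero_subspace.
have cardD : #|D| = (2 ^ 1)%N by rewrite card_adjoin ?zero_subspace ?inE // cards1.
have hAD x : x \in span A -> x \in D -> x = 0.
  move=> xA; rewrite inE => /orP[|/imsetP[a]]; first by rewrite inE => /eqP.
  by rewrite inE => /eqP -> xe; move: vA; rewrite -[v]addr0 -xe xA.
rewrite -[RHS](Kd1 R) -(sum_admissible (span_subspace A) sD hAD cardD) //.
apply: eq_bigr => S _.
case: (boolP (is_subspace S)) => sS; last by rewrite !Kcoef_nsubspace ?mul0r.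
suff -> : admissible (span A) D S = (A \subset S) && (v \notin S) by [].
rewrite /admissible.
have -> : (span A \subset S) = (A \subset S).
  by apply/idP/idP => [/(subset_trans (sub_span A))|/(span_min sS)].
congr (_ && _); apply/idP/idP; last first.
  move=> vS; apply/subsetP=> x; rewrite !inE => /andP[xS /orP[//|/imsetP[a]]].
  by rewrite inE => /eqP -> xe; move: vS; rewrite -[v]addr0 -xe xS.
apply: contraL => vS; apply/subsetPn; exists v; last by rewrite inE.
by rewrite inE vS mem_adjoin ?zero_subspace.
Qed.

End CodimensionCoefficient.

Lemma powR_sum (R : realType) (a : R) (I : finType) (P : pred I) (x : I -> R) :
  0 < a -> powR a (\sum_(j | P j) x j) = \prod_(j | P j) powR a (x j).
Proof.
move=> a0; elim/big_rec2: _ => [|j y1 y2 _ <-]; first exact: powRr0.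
by rewrite powRD // (lt0r_neq0 a0) implybT.
Qed.

Lemma sum_if_eq (R : nmodType) (I : finType) (P : pred I) (a : I) (x : R) :
  \sum_(j | P j) (if j == a then x else 0) = if P a then x else 0.
Proof.
rewrite big_mkcond /= (bigD1 a) //= eqxx big1 ?addr0 // => j /negbTE ->.
by case: (P j).
Qed.

(** Multiply by [\prod_(j | P j) ((1 - a j) + a j)] and expand. *)
Lemma prodr_predC_expand (R : comPzRingType) (I : finType) (P : pred I) (a : I -> R) :
  \prod_(j | ~~ P j) a j =
  \sum_(F : {ffun I -> bool})
     (\prod_j (if F j then 1 - a j else a j)) * [forall j, F j ==> P j]%:R.
Proof.
rewrite big_mkcond /=.
have splitj j : (if ~~ P j then a j else 1) =
   \sum_(b : bool) (if b then (if P j then 1 - a j else 0) else a j).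
  by rewrite big_bool /=; case: (P j); rewrite /= ?add0r ?subrK.
under eq_bigr => j _ do rewrite splitj.
rewrite bigA_distr_bigA /=; apply: eq_bigr => F _.
case: (boolP [forall j, F j ==> P j]) => h.
  rewrite mulr1; apply: eq_bigr => j _; case Fj: (F j) => //.
  by move: (forallP h j); rewrite Fj /= => ->.
rewrite mulr0; case/forallPn: h => j; rewrite negb_imply => /andP[Fj Pj].
by rewrite (bigD1 j) //= Fj (negbTE Pj) mul0r.
Qed.

Lemma powR_lt1 (R : realType) (a x : R) : 0 < a < 1 -> 0 < x -> powR a x < 1.
Proof.
case/andP=> a0 a1 x0.
by rewrite /powR (gt_eqF a0) expR_lt1 pmulr_rlt0 ?ln_lt0 ?a0.
Qed.

Section MoveMass.
Variables (R : realType) (k : nat).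
Implicit Types (q : 'I_(2 ^ k) -> R) (t : R) (i j l : 'I_(2 ^ k)).

Definition move_mass q (t : R) (i j : 'I_(2 ^ k)) : 'I_(2 ^ k) -> R :=
  fun l => q l - (if l == i then t else 0) + (if l == j then t else 0).

Lemma zeta_move_mass S q t i j : zeta S (move_mass q t i j) =
  zeta S q - (if nu k i \in S then t else 0) + (if nu k j \in S then t else 0).
Proof. by rewrite /zeta /move_mass big_split sumrB /= !sum_if_eq. Qed.

Lemma move_mass_inC q t i j : inC q -> i != j -> 0 <= t <= q i -> inC (move_mass q t i j).
Proof.
move=> [q_ge0 q_sum1] ij /andP[t_ge0 t_le]; split.
  move=> l; rewrite /move_mass; case: (eqVneq l i) => [->|li].
    by rewrite (negbTE ij) addr0 subr_ge0.
  by rewrite subr0 addr_ge0 //; case: ifP.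
by rewrite /move_mass big_split sumrB /= q_sum1 !(sum_if_eq xpredT) /= subrK.
Qed.

Lemma move_mass_near q t i j l : 0 <= t -> i != j -> `|move_mass q t i j l - q l| <= t.
Proof.
move=> t_ge0 ij; rewrite /move_mass addrAC (addrAC (q l)) subrr add0r.
case: (eqVneq l i) => [->|li]; first by rewrite (negbTE ij) addr0 normrN ger0_norm.
by rewrite oppr0 add0r; case: ifP; rewrite ?normr0 ?ger0_norm.
Qed.

End MoveMass.

Section Loss.
Variables (R : realType) (k n : nat) (eps : R).
Hypotheses (eps_gt0 : 0 < eps) (eps_le1 : eps <= 1).
Implicit Types (q : 'I_(2 ^ k) -> R) (t : R) (i j : 'I_(2 ^ k)) (v : W k) (S : {set W k}).

Local Notation term S q := (powR eps (n%:R * (1 - zeta S q))).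

Lemma loss_Kcoef q :
  loss n eps q = n%:R * (1 - eps) - k%:R + \sum_S Kcoef R S * term S q.
Proof.
rewrite /loss /Kcoef; congr (_ + _).
under eq_bigr => d _ do rewrite big_mkcond mulr_sumr /=.
rewrite exchange_big /=; apply: eq_bigr => S _; rewrite mulr_suml.
by apply: eq_bigr => d _; case: (Xi (k - d) S); rewrite ?mulr1 ?mulr0 ?mul0r.
Qed.

Definition avoiding_loss q v : R :=
  \sum_S Kcoef R S * (v \notin S)%:R * term S q.

Lemma loss_move_mass q t i j : nu k i = 0 ->
  loss n eps (move_mass q t i j) =
  loss n eps q + (powR eps (n%:R * t) - 1) * avoiding_loss q (nu k j).
Proof.
move=> nui0; rewrite !loss_Kcoef -!addrA; congr (_ + (_ + _)).
rewrite /avoiding_loss mulr_sumr -big_split; apply: eq_bigr => S _ /=.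
case: (boolP (is_subspace S)) => sS; last by rewrite Kcoef_nsubspace // !mul0r mulr0 addr0.
rewrite zeta_move_mass nui0 subspace0 //.
case: (nu k j \in S) => /=; first by rewrite mulr0 mul0r mulr0 addr0 subrK.
have -> : n%:R * (1 - (zeta S q - t + 0)) = n%:R * (1 - zeta S q) + n%:R * t by ring.
by rewrite powRD ?(lt0r_neq0 eps_gt0) ?implybT //; ring.
Qed.

Definition nu_support (F : {ffun 'I_(2 ^ k) -> bool}) : {set W k} :=
  [set nu k j | j : 'I_(2 ^ k) & F j].

Lemma nu_support_subset F S : (nu_support F \subset S) = [forall j, F j ==> (nu k j \in S)].
Proof.
apply/subsetP/forallP => [h j|h _ /imsetP[j Fj ->]].
  by apply/implyP => Fj; apply: h; apply/imsetP; exists j; rewrite ?inE.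
by have := h j; rewrite inE in Fj; rewrite Fj.
Qed.

Lemma avoiding_loss_gt0 q v : inC q -> v != 0 -> 0 < avoiding_loss q v.
Proof.
move=> [q_ge0 q_sum1] v0.
pose a j := powR eps (n%:R * q j).
pose w (F : {ffun 'I_(2 ^ k) -> bool}) := \prod_j (if F j then 1 - a j else a j).
have a_gt0 j : 0 < a j by apply: powR_gt0.
have a_le1 j : a j <= 1.
  by rewrite -(powRr0 eps) /a ger_powR ?eps_gt0 ?mulr_ge0 ?ler0n.
have w_ge0 F : 0 <= w F.
  by apply: prodr_ge0 => j _; case: (F j); rewrite ?subr_ge0 ?a_le1 ?ltW.
have termE S : term S q = \prod_(j : 'I_(2 ^ k) | nu k j \notin S) a j.
  rewrite -powR_sum // -mulr_sumr; congr (powR _ (_ * _)).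
  by rewrite -q_sum1 (bigID (fun j => nu k j \in S)) /= /zeta addrAC subrr add0r.
have -> : avoiding_loss q v = \sum_F w F * (v \notin span (nu_support F))%:R.
  rewrite /avoiding_loss.
  under eq_bigr => S _ do rewrite termE prodr_predC_expand mulr_sumr.
  rewrite exchange_big; apply: eq_bigr => F _ /=.
  rewrite -(sum_Kcoef_avoiding _ _ v0) mulr_sumr; apply: eq_bigr => S _.
  rewrite -nu_support_subset /w.
  by case: (nu_support F \subset S); case: (v \in S); rewrite /= ?mulr1n ?mulr0n; ring.
rewrite (bigD1 [ffun => false]) //=.
have w0_gt0 : 0 < w [ffun => false].
  by apply: prodr_gt0 => j _; rewrite ffunE.
have v_nspan0 : v \notin span (nu_support [ffun => false]).
  have span0 : span (nu_support [ffun => false]) \subset [set 0].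
    by apply: span_min (@zero_subspace k) _; apply/subsetP => x /imsetP[j]; rewrite inE ffunE.
  by apply: contra v0 => /(subsetP span0); rewrite inE.
have rest_ge0 : 0 <= \sum_(F | F != [ffun => false]) w F * (v \notin span (nu_support F))%:R.
  by apply: sumr_ge0 => F _; rewrite mulr_ge0.
by rewrite v_nspan0 mulr1 ltr_wpDr.
Qed.
End Loss.

Unset Implicit Arguments.

Theorem theorem2 (R : realType) (kappa n : nat) (eps : R)
  (hkappa : (1 <= kappa)%N) (hn : (1 <= n)%N)
  (heps0 : 0 < eps) (heps1 : eps < 1)
  (q : 'I_(2 ^ kappa) -> R) :
  @local_min_on_C R kappa (fun p => @loss R kappa n eps p) q ->
  forall i : 'I_(2 ^ kappa), nat_of_ord i = 0%N -> q i = 0.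
Proof.
move=> [Cq [e [e_gt0 q_min]]] i i0.
have nui0 : nu kappa i = 0 by apply/rowP => j; rewrite !mxE i0 div0n.
pose i1 := Ordinal (leq_ltn_trans hkappa (ltn_expl kappa (isT : 1 < 2)%N)).
have nu1_neq0 : nu kappa i1 != 0.
  by apply/eqP => /rowP /(_ (Ordinal hkappa)) /eqP; rewrite !mxE oner_eq0.
have i_neq1 : i != i1 by apply/eqP => /(congr1 val); rewrite /= i0.
apply/eqP; rewrite eq_le Cq.1 andbT leNgt; apply/negP => qi_gt0.
pose t := Num.min (q i) (e / 2).
have t_gt0 : 0 < t by rewrite lt_min qi_gt0 divr_gt0.
have t_lt_e : t < e by rewrite gt_min ltr_pdivrMr ?ltr_pMr ?ltr1n ?orbT.
have Cq' : inC (move_mass q t i i1).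
  by apply: move_mass_inC; rewrite // ltW //= ge_min lexx.
have near l : `|move_mass q t i i1 l - q l| < e.
  exact: le_lt_trans (move_mass_near _ _ (ltW t_gt0) i_neq1) t_lt_e.
have := q_min _ Cq' near; rewrite loss_move_mass //.
have E_lt1 : powR eps (n%:R * t) < 1 by rewrite powR_lt1 ?heps0 ?mulr_gt0 ?ltr0n.
have B_gt0 := avoiding_loss_gt0 n heps0 (ltW heps1) Cq nu1_neq0.
by rewrite lerDl pmulr_lge0 // subr_ge0 leNgt E_lt1.
Qed.
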